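(* Let $S$ be a finite generating subset of a group $G$ with $1\in S$. Assume that the graph $\Gamma=\mathrm{Cay}(G,S)$ is degenerate, and let $H$ be a subgroup of $G$ which is a $2$-fragment of $\Gamma$. Then $S^{-1}HS=S^{-1}S\cup a^{-1}Ha$ for some $a\in S$.
   Context: $\mathrm{Cay}(G,S)$ is the graph $(G,E)$ with $E=\{(x,y):x^{-1}y\in S\}$, so $\Gamma(X)=XS=\{xs:x\in X,s\in S\}$. Write $\partial(X)=XS\setminus X$ and $\nabla(X)=G\setminus XS$. $\Gamma$ is $k$-separable if there is a finite $X$ with $|X|\ge k$, $|\nabla(X)|\ge k$, and then $\kappa_k(\Gamma)=\min\{|\partial(X)|: X\text{ finite},|X|\ge k,|\nabla(X)|\ge k\}$. A $k$-fragment is a finite $X$ with $|X|\ge k$, $|\nabla(X)|\ge k$ and $|\partial(X)|=\kappa_k(\Gamma)$. $\Gamma$ is degenerate if it is $2$-separable and $\kappa_2(\Gamma)=\kappa_1(\Gamma)$. *)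

From HB Require Import structures.
From mathcomp Require Import all_boot.
From mathcomp Require Import finmap.
Set Implicit Arguments. Unset Strict Implicit. Unset Printing Implicit Defensive.
Local Open Scope fset_scope.
Local Open Scope group_scope.

Section CayleyConnectivity.
Variable G : groupType.

Definition setmul (A B : {fset G}) : {fset G} := [fset x * y | x in A, y in B].
Definition setinv (A : {fset G}) : {fset G} := [fset x^-1 | x in A].
Definition conjset (a : G) (A : {fset G}) : {fset G} := [fset a^-1 * h * a | h in A].

Definition generates (S : {fset G}) : Prop :=
  forall g : G, exists l : seq G,
    all (fun x => (x \in S) || (x^-1 \in S)) l /\ g = foldr (fun x y => x * y) 1 l.

Definition is_subgroup (H : {fset G}) : Prop :=
  1 \in H /\ (forall x y, x \in H -> y \in H -> x * y \in H) /\
  (forall x, x \in H -> x^-1 \in H).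

(* Gamma(X) = XS in Cay(G,S) *)
Definition Gam (S X : {fset G}) : {fset G} := setmul X S.
Definition bdry (S X : {fset G}) : {fset G} := Gam S X `\` X.
(* |∇(X)| >= k where ∇(X) = G \ XS (possibly infinite): there exist
   k distinct elements outside XS *)
Definition nabla_ge (S X : {fset G}) (k : nat) : Prop :=
  exists Y : {fset G}, (k <= #|` Y|)%N /\ (forall y, y \in Y -> y \notin Gam S X).

Definition admissible (S : {fset G}) (k : nat) (X : {fset G}) : Prop :=
  (k <= #|` X|)%N /\ nabla_ge S X k.

Definition separable (S : {fset G}) (k : nat) : Prop :=
  exists X, admissible S k X.

Definition is_kappa (S : {fset G}) (k n : nat) : Prop :=
  (exists X, admissible S k X /\ #|` bdry S X| = n) /\
  (forall X, admissible S k X -> (n <= #|` bdry S X|)%N).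

Definition fragment (S : {fset G}) (k : nat) (X : {fset G}) : Prop :=
  admissible S k X /\ forall n, is_kappa S k n -> #|` bdry S X| = n.

Definition degenerate (S : {fset G}) : Prop :=
  separable S 2 /\ exists n, is_kappa S 2 n /\ is_kappa S 1 n.

End CayleyConnectivity.

(** Since 1 ∈ S, the 1-fragment candidate {1} has boundary S \ {1}, so
    degeneracy gives |HS| < |S| + |H|.  For s ∈ S write C(s) = S ∩ Hs.  Two
    distinct cosets Hs, Ht lie in HS together with S, and counting yields
    |C(s)| + |C(t)| > |H|.  On the other hand, if s⁻¹ h t ∉ S⁻¹S then
    u ↦ u s⁻¹ h and v ↦ v t⁻¹ embed C(s) and C(t) disjointly into H, so
    |C(s)| + |C(t)| ≤ |H|.  Hence every element s⁻¹ h t of S⁻¹HS outside S⁻¹S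
    has Hs = Ht and |C(s)| ≤ |H|/2, and any two such elements share the coset
    Hs = Ha; this puts all of them in a⁻¹Ha. *)
From HB Require Import structures.
From mathcomp Require Import all_boot.
From mathcomp Require Import finmap.
From mathcomp Require Import zify.
Set Implicit Arguments. Unset Strict Implicit. Unset Printing Implicit Defensive.
Local Open Scope fset_scope.
Local Open Scope group_scope.

Section CayleySets.
Variable G : groupType.
Implicit Types (S X Y : {fset G}).

Lemma setmulP X Y x :
  reflect (exists2 a, a \in X & exists2 b, b \in Y & x = a * b) (x \in setmul X Y).
Proof. exact: imfset2P. Qed.

Lemma mem_setmul X Y a b : a \in X -> b \in Y -> a * b \in setmul X Y.
Proof. by move=> aX bY; apply/setmulP; exists a => //; exists b. Qed.

Lemma setinvP X x : (x \in setinv X) = (x^-1 \in X).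
Proof.
apply/imfsetP/idP => [[y yX ->]|xX]; first by rewrite invgK.
by exists x^-1 => //; rewrite invgK.
Qed.

Lemma mem_mulVXS S X x : x \in setmul (setmul (setinv S) X) S ->
  exists s h t, [/\ s \in S, h \in X, t \in S & x = s^-1 * h * t].
Proof.
move=> /setmulP[_ /setmulP[z zSV [h hX ->]] [t tS ->]].
by exists z^-1, h, t; rewrite invgK -setinvP.
Qed.

Lemma fcardU_disjoint X Y : [disjoint X & Y] -> #|` X `|` Y| = (#|` X| + #|` Y|)%N.
Proof. by rewrite -fsetI_eq0 => /eqP XY0; rewrite -cardfsUI XY0 cardfs0 addn0. Qed.

Definition rcoset X (s : G) : {fset G} := [fset h * s | h in X].

Lemma mem_rcoset X s u : (u \in rcoset X s) = (u * s^-1 \in X).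
Proof.
apply/imfsetP/idP => [[h hX ->]|usX]; first by rewrite mulgK.
by exists (u * s^-1) => //; rewrite mulgVK.
Qed.

Lemma card_rcoset X s : #|` rcoset X s| = #|` X|.
Proof. by rewrite card_in_imfset //= => x y _ _; apply: mulIg. Qed.

Lemma Gam_fset1 S : Gam S [fset 1] = S.
Proof.
apply/fsetP => x; apply/setmulP/idP => [[_ /fset1P-> [b bS ->]]|xS].
  by rewrite mul1g.
by exists 1; rewrite ?inE //; exists x; rewrite ?mul1g.
Qed.

Lemma sub_Gam S X : 1 \in S -> X `<=` Gam S X.
Proof. by move=> S1; apply/fsubsetP => x xX; rewrite -[x]mulg1 mem_setmul. Qed.

Lemma Gam_subset S X Y : X `<=` Y -> Gam S X `<=` Gam S Y.
Proof.
move=> /fsubsetP XY; apply/fsubsetP => _ /setmulP[a aX [b bS ->]].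
by rewrite mem_setmul ?XY.
Qed.

Lemma card_bdry S X : 1 \in S -> #|` bdry S X| = (#|` Gam S X| - #|` X|)%N.
Proof. by move=> S1; rewrite /bdry cardfsDS ?sub_Gam. Qed.

Lemma admissible_fset1 S X k :
  1 \in X -> admissible S k.+1 X -> admissible S 1 [fset 1].
Proof.
move=> X1 [kX [Y [kY Yout]]]; split; first by rewrite cardfs1.
have SX : S `<=` Gam S X by rewrite -{1}(Gam_fset1 S) Gam_subset ?fsub1set.
exists Y; split; first exact: leq_trans kY.
by move=> y /Yout; apply: contra; rewrite Gam_fset1; apply: (fsubsetP SX).
Qed.

Lemma degenerate_card_Gam S X : 1 \in S -> 1 \in X ->
  degenerate S -> fragment S 2 X -> (#|` Gam S X| < #|` S| + #|` X|)%N.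
Proof.
move=> S1 X1 [_ [n [kappa2 kappa1]]] [admX fragX].
have := fragX n kappa2; rewrite card_bdry // => bdryX.
have := kappa1.2 _ (admissible_fset1 X1 admX).
rewrite card_bdry // Gam_fset1 cardfs1 -bdryX.
have := fsubset_leq_card (sub_Gam X S1).
have : (1 <= #|` S|)%N by rewrite -(cardfs1 (1 : G)) fsubset_leq_card ?fsub1set.
lia.
Qed.

End CayleySets.

Section DegenerateSubgroup.
Variables (G : groupType) (S H : {fset G}).
Hypothesis subH : is_subgroup H.
Hypothesis small_Gam : (#|` Gam S H| < #|` S| + #|` H|)%N.

Let H1 : 1 \in H := subH.1.
Let groupM x y : x \in H -> y \in H -> x * y \in H := subH.2.1 x y.
Let groupV x : x \in H -> x^-1 \in H := subH.2.2 x.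

Definition trace (s : G) : {fset G} := S `&` rcoset H s.

Lemma mem_rcoset_div s t u :
  u \in rcoset H s -> u \in rcoset H t -> t * s^-1 \in H.
Proof.
rewrite !mem_rcoset => us ut.
by have := groupM (groupV ut) us; rewrite invgM invgK mulgA mulgVK.
Qed.

Lemma trace_eq s t : t * s^-1 \in H -> trace t = trace s.
Proof.
move=> tsH; apply/fsetP => u; rewrite !inE !mem_rcoset; congr (_ && _).
apply/idP/idP => uH; first by have := groupM uH tsH; rewrite mulgA mulgVK.
by have := groupM uH (groupV tsH); rewrite invgM invgK mulgA mulgVK.
Qed.

Lemma card_trace_gt s t : s \in S -> t \in S -> t * s^-1 \notin H ->
  (#|` H| < #|` trace s| + #|` trace t|)%N.
Proof.
move=> sS tS tsH.
pose U := rcoset H s `|` rcoset H t.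
have cardU : #|` U| = (#|` H| + #|` H|)%N.
  rewrite fcardU_disjoint ?card_rcoset //; apply/fdisjointP => u us.
  by apply: contra tsH; apply: mem_rcoset_div.
have US_Gam : U `|` S `<=` Gam S H.
  apply/fsubsetP => u; rewrite !inE !mem_rcoset -orbA => /or3P[uH|uH|uS].
  - by rewrite -(mulgVK s u) mem_setmul.
  - by rewrite -(mulgVK t u) mem_setmul.
  - by rewrite -[u]mul1g mem_setmul.
have US_trace : U `&` S `<=` trace s `|` trace t.
  by apply/fsubsetP => u; rewrite !inE => /andP[/orP[]-> ->]; rewrite ?orbT.
have := cardfsUI U S; have := fsubset_leq_card US_Gam.
have := fsubset_leq_card US_trace; have := cardfsUI (trace s) (trace t).
lia.
Qed.

Lemma card_trace_le s t h : s \in S -> t \in S -> h \in H ->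
  s^-1 * h * t \notin setmul (setinv S) S ->
  (#|` trace s| + #|` trace t| <= #|` H|)%N.
Proof.
move=> sS tS hH bad.
pose I := [fset u * s^-1 * h | u in trace s].
pose J := [fset v * t^-1 | v in trace t].
have cardI : #|` I| = #|` trace s|.
  by rewrite card_in_imfset //= => x y _ _ /mulIg/mulIg.
have cardJ : #|` J| = #|` trace t| by rewrite card_in_imfset //= => x y _ _ /mulIg.
have IJ : [disjoint I & J].
  apply/fdisjointP => _ /imfsetP[u +->]; rewrite !inE => /andP[uS _].
  apply/negP => /imfsetP[v]; rewrite !inE => /andP[vS _] E.
  move/negP: bad; apply; apply/setmulP; exists u^-1; first by rewrite setinvP invgK.
  exists v => //; apply: (mulgI u); apply: (mulIg t^-1).
  by rewrite !mulgA mulgV mul1g mulgK -E.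
have IJ_H : I `|` J `<=` H.
  apply/fsubsetP => w /fsetUP[]/imfsetP[u];
    rewrite !inE mem_rcoset => /andP[_ uH] -> //.
  exact: groupM.
by rewrite -cardI -cardJ -fcardU_disjoint // fsubset_leq_card.
Qed.

Definition outlier (s h t : G) :=
  [/\ s \in S, h \in H, t \in S & s^-1 * h * t \notin setmul (setinv S) S].

Lemma outlier_trace s h t : outlier s h t ->
  t * s^-1 \in H /\ (#|` trace s| + #|` trace s| <= #|` H|)%N.
Proof.
move=> [sS hH tS bad]; have le := card_trace_le sS tS hH bad.
have tsH : t * s^-1 \in H.
  by apply: contraT => /(card_trace_gt sS tS); rewrite ltnNge le.
by rewrite -{2}(trace_eq tsH).
Qed.

Lemma outlier_conj a h0 t0 s h t : outlier a h0 t0 -> outlier s h t ->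
  s^-1 * h * t \in conjset a H.
Proof.
move=> outa outs; have [tsH le_s] := outlier_trace outs.
have [_ le_a] := outlier_trace outa.
have [[aS _ _ _] [sS hH tS _]] := (outa, outs).
have asH : a * s^-1 \in H.
  by apply: contraT => /(card_trace_gt sS aS); lia.
apply/imfsetP; exists (a * s^-1 * h * (t * a^-1)).
  apply: groupM; first exact: groupM.
  by have := groupM tsH (groupV asH); rewrite invgM invgK mulgA mulgVK.
by rewrite !mulgA mulVg mul1g mulgVK.
Qed.

Lemma mulVS_conj_sub a : a \in S ->
  setmul (setinv S) S `|` conjset a H `<=` setmul (setmul (setinv S) H) S.
Proof.
move=> aS; apply/fsubsetP => _ /fsetUP[/setmulP[y yS [v vS ->]]|/imfsetP[k kH ->]].
  by rewrite -[y]mulg1 mem_setmul ?mem_setmul.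
by rewrite mem_setmul ?mem_setmul ?setinvP ?invgK.
Qed.

Lemma mulVHS_eq : 1 \in S -> exists2 a, a \in S &
  setmul (setmul (setinv S) H) S = setmul (setinv S) S `|` conjset a H.
Proof.
move=> S1.
have [B0|[x]] := fset_0Vmem (setmul (setmul (setinv S) H) S `\` setmul (setinv S) S).
  exists 1 => //; apply/eqP; rewrite eqEfsubset mulVS_conj_sub // andbT.
  by apply: fsubset_trans (fsubsetUl _ _); rewrite -fsetD_eq0 B0.
rewrite inE => /andP[bad /mem_mulVXS[a [h0 [t0 [aS h0H t0S xE]]]]].
have outa : outlier a h0 t0 by split; rewrite // -xE.
exists a => //; apply/eqP; rewrite eqEfsubset mulVS_conj_sub // andbT.
apply/fsubsetP => _ /mem_mulVXS[s [h [t [sS hH tS ->]]]].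
have [|bads] := boolP (s^-1 * h * t \in setmul (setinv S) S); first by rewrite inE => ->.
by rewrite inE (@outlier_conj a h0 t0) ?orbT.
Qed.

End DegenerateSubgroup.

Theorem lemma9p2 (G : groupType) (S H : {fset G}) :
  generates S -> 1 \in S -> degenerate S ->
  is_subgroup H -> fragment S 2 H ->
  exists2 a, a \in S &
    setmul (setmul (setinv S) H) S = setmul (setinv S) S `|` conjset a H.
Proof.
move=> _ S1 degS subH fragH.
exact: mulVHS_eq subH (degenerate_card_Gam S1 subH.1 degS fragH) S1.
Qed.
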